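(* Let $\Gamma_1,\Gamma_2$ be propositional theories over $\mathcal L$ and let $e\in\{c,a,s,u\}$. Then the following are equivalent: (1) $\Gamma_1\equiv_e\Gamma_2$; (2) $C_e(\Gamma_1)=C_e(\Gamma_2)$; (3) $E_e(\Gamma_1)=E_e(\Gamma_2)$.
   Context: A propositional signature $\mathcal L$ is a set of atoms. Formulas are built from atoms and $\bot$ using $\wedge,\vee,\to$; $\neg\phi$ abbreviates $\phi\to\bot$. A theory is a set of formulas. An HT-interpretation over $\mathcal L$ is a pair $(X,Y)$ with $X\subseteq Y\subseteq\mathcal L$; it is total if $X=Y$. $Y\models\phi$ denotes classical satisfaction. HT-satisfaction: $(X,Y)\models a$ iff $a\in X$ for an atom $a$; $(X,Y)\not\models\bot$; $\wedge,\vee$ componentwise; $(X,Y)\models\phi\to\psi$ iff (i) $(X,Y)\not\models\phi$ or $(X,Y)\models\psi$, and (ii) $Y\models\phi\to\psi$. $(X,Y)\models\Gamma$ iff it satisfies every formula of $\Gamma$. A total $(Y,Y)$ is an equilibrium model of $\Gamma$ iff $(Y,Y)\models\Gamma$ and $(X,Y)\not\models\Gamma$ for all $X\subsetneq Y$; then $Y$ is an answer set of $\Gamma$. A formula is factual if it is built from atoms and $\bot$ using only $\wedge,\vee$ and implications of the form $\phi\to\bot$. For theories $\Gamma_1,\Gamma_2$ over $\mathcal L$: $\Gamma_1\equiv_c\Gamma_2$ iff they have the same classical models; $\Gamma_1\equiv_a\Gamma_2$ iff they have the same answer sets; $\Gamma_1\equiv_s\Gamma_2$ iff for every $\mathcal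 L'\supseteq\mathcal L$ and every theory $\Gamma$ over $\mathcal L'$, $\Gamma_1\cup\Gamma$ and $\Gamma_2\cup\Gamma$ have the same answer sets; $\Gamma_1\equiv_u\Gamma_2$ iff the same holds for every factual theory $\Gamma$ over every $\mathcal L'\supseteq\mathcal L$. $C_s(\Gamma)$ is the set of HT-countermodels of $\Gamma$ (HT-interpretations over $\mathcal L$ not satisfying $\Gamma$). A here-countermodel is an HT-countermodel $(X,Y)$ with $Y\models\Gamma$; $E_s(\Gamma)$ is the set of equivalence interpretations, i.e. total HT-models of $\Gamma$ together with here-countermodels of $\Gamma$. For a set $S$ of HT-interpretations: a total $(Y,Y)$ is total-closed in $S$ if $(X,Y)\in S$ for every $X\subseteq Y$; $(X,Y)$ is closed in $S$ if $(X',Y)\in S$ for every $X\subseteq X'\subseteq Y$; $(X,Y)$ is there-closed in $S$ if $(Y,Y)\notin S$ and $(X',Y)\in S$ for every $X\subseteq X'\subsetneq Y$. Define: $C_c(\Gamma)$, $E_c(\Gamma)$ = the total interpretations in $C_s(\Gamma)$, resp. $E_s(\Gamma)$; $C_a(\Gamma)$ = the set of HT-interpretations of the form $(\emptyset,Y)$ that are there-closed in $C_s(\Gamma)$; $E_a(\Gamma)$ = the set of total interpretations that are total-closed in $E_s(\Gamma)$; $C_u(\Gamma)$ = the set of HT-interpretations that are there-closed in $C_s(\Gamma)$; $E_u(\Gamma)$ = the set of HT-interpretations that are closed in $E_s(\Gamma)$. *)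

From Stdlib Require Import Classical.

Set Implicit Arguments.

Definition aset (A : Type) := A -> Prop.
Definition subset {A : Type} (X Y : aset A) : Prop := forall a, X a -> Y a.
Definition psubset {A : Type} (X Y : aset A) : Prop := subset X Y /\ ~ subset Y X.
Definition same {A : Type} (X Y : aset A) : Prop := forall a, X a <-> Y a.

Inductive form (A : Type) : Type :=
| Atom : A -> form A
| Bot : form A
| And : form A -> form A -> form A
| Or : form A -> form A -> form A
| Imp : form A -> form A -> form A.
Arguments Bot {A}.

Definition Neg {A : Type} (p : form A) : form A := Imp p Bot.

Definition theory (A : Type) := form A -> Prop.
Definition tunion {A : Type} (G1 G2 : theory A) : theory A :=
  fun p => G1 p \/ G2 p.

Fixpoint form_over {A : Type} (L : aset A) (p : form A) : Prop :=
  match p with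
  | Atom a => L a
  | Bot => True
  | And p q | Or p q | Imp p q => form_over L p /\ form_over L q
  end.
Definition theory_over {A : Type} (L : aset A) (G : theory A) : Prop :=
  forall p, G p -> form_over L p.

Inductive factual {A : Type} : form A -> Prop :=
| fact_atom : forall a, factual (Atom a)
| fact_bot : factual Bot
| fact_and : forall p q, factual p -> factual q -> factual (And p q)
| fact_or : forall p q, factual p -> factual q -> factual (Or p q)
| fact_neg : forall p, factual p -> factual (Imp p Bot).
Definition factual_theory {A : Type} (G : theory A) : Prop :=
  forall p, G p -> factual p.

Fixpoint csat {A : Type} (Y : aset A) (p : form A) : Prop :=
  match p with
  | Atom a => Y a
  | Bot => False
  | And p q => csat Y p /\ csat Y q
  | Or p q => csat Y p \/ csat Y q
  | Imp p q => csat Y p -> csat Y q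
  end.
Definition cmodel {A : Type} (G : theory A) (Y : aset A) : Prop :=
  forall p, G p -> csat Y p.

Fixpoint htsat {A : Type} (X Y : aset A) (p : form A) : Prop :=
  match p with
  | Atom a => X a
  | Bot => False
  | And p q => htsat X Y p /\ htsat X Y q
  | Or p q => htsat X Y p \/ htsat X Y q
  | Imp p q => (htsat X Y p -> htsat X Y q) /\ csat Y (Imp p q)
  end.
Definition htmodel {A : Type} (G : theory A) (X Y : aset A) : Prop :=
  forall p, G p -> htsat X Y p.

Definition interp_over {A : Type} (L : aset A) (X Y : aset A) : Prop :=
  subset X Y /\ subset Y L.
Definition total {A : Type} (X Y : aset A) : Prop := same X Y.

Definition answer_set {A : Type} (L : aset A) (G : theory A) (Y : aset A) : Prop :=
  subset Y L /\ htmodel G Y Y /\ (forall X, psubset X Y -> ~ htmodel G X Y).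

Definition same_answer_sets {A : Type} (L : aset A) (G1 G2 : theory A) : Prop :=
  forall Y, answer_set L G1 Y <-> answer_set L G2 Y.

Inductive ekind := Kc | Ka | Ks | Ku.

Definition equiv_c {A : Type} (L : aset A) (G1 G2 : theory A) : Prop :=
  forall Y, subset Y L -> (cmodel G1 Y <-> cmodel G2 Y).
Definition equiv_a {A : Type} (L : aset A) (G1 G2 : theory A) : Prop :=
  same_answer_sets L G1 G2.
Definition equiv_s {A : Type} (L : aset A) (G1 G2 : theory A) : Prop :=
  forall L' : aset A, subset L L' -> forall G : theory A, theory_over L' G ->
    same_answer_sets L' (tunion G1 G) (tunion G2 G).
Definition equiv_u {A : Type} (L : aset A) (G1 G2 : theory A) : Prop :=
  forall L' : aset A, subset L L' -> forall G : theory A, theory_over L' G ->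
    factual_theory G ->
    same_answer_sets L' (tunion G1 G) (tunion G2 G).

Definition equiv (e : ekind) {A : Type} (L : aset A) (G1 G2 : theory A) : Prop :=
  match e with
  | Kc => equiv_c L G1 G2
  | Ka => equiv_a L G1 G2
  | Ks => equiv_s L G1 G2
  | Ku => equiv_u L G1 G2
  end.

Definition htset (A : Type) := aset A -> aset A -> Prop.
Definition same_htset {A : Type} (S1 S2 : htset A) : Prop :=
  forall X Y, S1 X Y <-> S2 X Y.

Definition total_closed {A : Type} (S : htset A) (Y : aset A) : Prop :=
  forall X, subset X Y -> S X Y.
Definition closed_in {A : Type} (S : htset A) (X Y : aset A) : Prop :=
  forall X', subset X X' -> subset X' Y -> S X' Y.
Definition there_closed {A : Type} (S : htset A) (X Y : aset A) : Prop :=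
  ~ S Y Y /\ (forall X', subset X X' -> psubset X' Y -> S X' Y).

Definition Cs_set {A : Type} (L : aset A) (G : theory A) : htset A :=
  fun X Y => interp_over L X Y /\ ~ htmodel G X Y.
Definition Es_set {A : Type} (L : aset A) (G : theory A) : htset A :=
  fun X Y => interp_over L X Y /\
    ((total X Y /\ htmodel G X Y) \/ (cmodel G Y /\ ~ htmodel G X Y)).

Definition Cset (e : ekind) {A : Type} (L : aset A) (G : theory A) : htset A :=
  match e with
  | Kc => fun X Y => Cs_set L G X Y /\ total X Y
  | Ka => fun X Y => interp_over L X Y /\ (forall a, ~ X a) /\
                     there_closed (Cs_set L G) X Y
  | Ks => Cs_set L G
  | Ku => fun X Y => interp_over L X Y /\ there_closed (Cs_set L G) X Y
  end.

Definition Eset (e : ekind) {A : Type} (L : aset A) (G : theory A) : htset A :=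
  match e with
  | Kc => fun X Y => Es_set L G X Y /\ total X Y
  | Ka => fun X Y => interp_over L X Y /\ total X Y /\ total_closed (Es_set L G) Y
  | Ks => Es_set L G
  | Ku => fun X Y => interp_over L X Y /\ closed_in (Es_set L G) X Y
  end.

(* Strong equivalence is agreement of the HT-models over L.  Answer sets of a
   union only depend on the HT-models (X, Y) with X below Y, and by restricting
   to L those of G1 and G2 agree.  Conversely an HT-model (X, Y) of G1 that is
   not one of G2 is separated by adding the facts X and the implications
   a -> b for a, b in Y \ X: the only HT-models of these below Y are X and Y.

   Uniform equivalence is agreement of the UE-models: (X, Y) with Y a model and
   no HT-model (Z, Y) with X <= Z < Y.  Adding the facts W, X <= W <= Y, probes
   them; conversely a witness (X, Y) against minimality of Y for G2 u G is
   restricted to L, turned into one of G1 by the UE-models, and re-extended by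
   X, which keeps the factual part G satisfied since factual formulas are
   preserved when the here-world grows.  In every case C_e and E_e are
   reformulations of the characteristic sets. *)
From Stdlib Require Import Classical.

Set Implicit Arguments.

Section HTBasics.
Context {A : Type}.
Implicit Types (X Y Z W L : aset A) (p : form A) (G F : theory A).

Lemma subset_refl X : subset X X.
Proof. intros a h; exact h. Qed.

Lemma same_refl X : same X X.
Proof. intro; tauto. Qed.

Lemma psubset_not_same X Y : psubset X Y -> ~ same X Y.
Proof. intros [_ N] E; apply N; intro a; apply E. Qed.

Lemma psubset_of_not_same X Y : subset X Y -> ~ same X Y -> psubset X Y.
Proof. intros S N; split; [exact S|]; intro S'; apply N; intro a; split; auto. Qed.

Lemma csat_same p Y Y' : same Y Y' -> (csat Y p <-> csat Y' p).
Proof. intro E; induction p; simpl; firstorder. Qed.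

Lemma htsat_same p X X' Y Y' : same X X' -> same Y Y' ->
  (htsat X Y p <-> htsat X' Y' p).
Proof.
  intros EX EY; induction p; simpl; try firstorder.
  all: pose proof (csat_same p1 EY); pose proof (csat_same p2 EY); tauto.
Qed.

Lemma htmodel_same G X X' Y Y' : same X X' -> same Y Y' ->
  (htmodel G X Y <-> htmodel G X' Y').
Proof.
  intros EX EY; split; intros H p Hp; apply (htsat_same p EX EY); auto.
Qed.

Lemma csat_of_htsat p X Y : subset X Y -> htsat X Y p -> csat Y p.
Proof. intro S; induction p; simpl; firstorder. Qed.

Lemma cmodel_of_htmodel G X Y : subset X Y -> htmodel G X Y -> cmodel G Y.
Proof. intros S H p Hp; eapply csat_of_htsat; eauto. Qed.

Lemma htsat_total p Y : htsat Y Y p <-> csat Y p.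
Proof. induction p; simpl; tauto. Qed.

Lemma htmodel_total G Y : htmodel G Y Y <-> cmodel G Y.
Proof. split; intros H p Hp; apply htsat_total; auto. Qed.

Lemma htmodel_same_total G X Y : same X Y -> (htmodel G X Y <-> cmodel G Y).
Proof.
  intro E; rewrite (htmodel_same G E (same_refl Y)); apply htmodel_total.
Qed.

Lemma factual_htsat_mono p X X' Y : factual p -> subset X X' -> subset X' Y ->
  htsat X Y p -> htsat X' Y p.
Proof.
  intros Fp S1 S2; induction Fp; simpl; try firstorder.
  apply H0; eapply csat_of_htsat; eauto.
Qed.

Lemma htmodel_tunion G F X Y :
  htmodel (tunion G F) X Y <-> htmodel G X Y /\ htmodel F X Y.
Proof. unfold htmodel, tunion; firstorder. Qed.

Definition restr L X : aset A := fun a => X a /\ L a.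

Lemma interp_over_restr L X Y : subset X Y -> interp_over L (restr L X) (restr L Y).
Proof. intro S; split; intros a [h l]; [split; auto|exact l]. Qed.

Lemma csat_restr L p Y : form_over L p -> (csat Y p <-> csat (restr L Y) p).
Proof. unfold restr; induction p; simpl; firstorder. Qed.

Lemma htsat_restr L p X Y : form_over L p ->
  (htsat X Y p <-> htsat (restr L X) (restr L Y) p).
Proof.
  induction p; simpl; intros Hp; unfold restr in *; try firstorder.
  all: pose proof (csat_restr L p1 Y H); pose proof (csat_restr L p2 Y H0);
       unfold restr in *; tauto.
Qed.

Lemma htmodel_restr L G X Y : theory_over L G ->
  (htmodel G X Y <-> htmodel G (restr L X) (restr L Y)).
Proof.
  intro TG; split; intros H p Hp; apply (htsat_restr L p X Y (TG p Hp)); auto.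
Qed.

Lemma cmodel_restr L G Y : theory_over L G -> (cmodel G Y <-> cmodel G (restr L Y)).
Proof.
  intro TG; split; intros H p Hp; apply (csat_restr L p Y (TG p Hp)); auto.
Qed.

Definition facts X : theory A := fun p => exists a, X a /\ p = Atom a.

Lemma htmodel_facts X Z Y : htmodel (facts X) Z Y <-> subset X Z.
Proof.
  split.
  - intros H a Ha; apply (H (Atom a)); exists a; auto.
  - intros H p [a [Ha ->]]; simpl; auto.
Qed.

Lemma facts_over L X : subset X L -> theory_over L (facts X).
Proof. intros S p [a [Ha ->]]; simpl; auto. Qed.

Lemma facts_factual X : factual_theory (facts X).
Proof. intros p [a [Ha ->]]; constructor. Qed.

Lemma answer_set_tunion_facts L G X Y : subset X Y -> subset Y L -> cmodel G Y ->
  (forall Z, subset X Z -> psubset Z Y -> ~ htmodel G Z Y) ->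
  answer_set L (tunion G (facts X)) Y.
Proof.
  intros SX SY C HZ; split; [exact SY|split].
  - apply htmodel_tunion; split; [apply htmodel_total; exact C|].
    apply htmodel_facts; exact SX.
  - intros Z PZ M; apply htmodel_tunion in M as [M MF].
    apply htmodel_facts in MF; exact (HZ Z MF PZ M).
Qed.

Lemma cmodel_of_answer_set L G F Y : answer_set L (tunion G F) Y -> cmodel G Y.
Proof.
  intros [_ [M _]]; apply htmodel_tunion in M as [M _]; apply htmodel_total, M.
Qed.

Lemma answer_set_tunion_facts_min L G W Y :
  answer_set L (tunion G (facts W)) Y -> psubset W Y -> ~ htmodel G W Y.
Proof.
  intros [_ [_ N]] PW M; apply (N W PW), htmodel_tunion.
  split; [exact M|apply htmodel_facts, subset_refl].
Qed.

Lemma answer_set_tunion_congr L G1 G2 F Y :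
  (forall X, subset X Y -> (htmodel G1 X Y <-> htmodel G2 X Y)) ->
  answer_set L (tunion G1 F) Y -> answer_set L (tunion G2 F) Y.
Proof.
  intros E [SY [M N]]; rewrite htmodel_tunion in M.
  split; [exact SY|split].
  - apply htmodel_tunion; rewrite <- (E Y (subset_refl Y)); exact M.
  - intros X PX MX; apply (N X PX); apply htmodel_tunion in MX.
    apply htmodel_tunion; rewrite (E X (proj1 PX)); exact MX.
Qed.

End HTBasics.

Section ClassicalEquivalence.
Context {A : Type}.
Implicit Types (X Y L : aset A) (G : theory A).

Lemma equiv_c_iff_Cset L G1 G2 :
  equiv_c L G1 G2 <-> same_htset (Cset Kc L G1) (Cset Kc L G2).
Proof.
  assert (K : forall G X Y,
    Cset Kc L G X Y <-> subset Y L /\ same X Y /\ ~ cmodel G Y).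
  { intros G X Y; simpl; unfold Cs_set, interp_over, total; split.
    - intros [[[_ SY] N] E]; rewrite htmodel_same_total in N; auto.
    - intros [SY [E N]]; rewrite htmodel_same_total by exact E.
      refine (conj (conj (conj _ SY) N) E); intros a h; apply E, h. }
  unfold equiv_c, same_htset; split.
  - intros H X Y; rewrite !K; split; intros [SY [E N]]; rewrite (H Y SY) in *; auto.
  - intros H Y SY; specialize (H Y Y); rewrite !K in H.
    pose proof (same_refl Y); split; intro C; apply NNPP; tauto.
Qed.

Lemma equiv_c_iff_Eset L G1 G2 :
  equiv_c L G1 G2 <-> same_htset (Eset Kc L G1) (Eset Kc L G2).
Proof.
  assert (K : forall G X Y,
    Eset Kc L G X Y <-> subset Y L /\ same X Y /\ cmodel G Y).
  { intros G X Y; simpl; unfold Es_set, interp_over, total; split.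
    - intros [[[_ SY] D] E]; rewrite !htmodel_same_total in D; tauto.
    - intros [SY [E C]]; rewrite !htmodel_same_total by exact E.
      refine (conj (conj (conj _ SY) (or_introl (conj E C))) E).
      intros a h; apply E, h. }
  unfold equiv_c, same_htset; split.
  - intros H X Y; rewrite !K; split; intros [SY [E C]]; rewrite (H Y SY) in *; auto.
  - intros H Y SY; specialize (H Y Y); rewrite !K in H.
    pose proof (same_refl Y); tauto.
Qed.

End ClassicalEquivalence.

Section AnswerSets.
Context {A : Type}.
Implicit Types (X Y Z L : aset A) (G : theory A).

Lemma Cset_Ka L G X Y : Cset Ka L G X Y <-> (forall a, ~ X a) /\ answer_set L G Y.
Proof.
  simpl; unfold there_closed, Cs_set, interp_over, answer_set; split.
  - intros [[_ SY] [E [NY HZ]]]; split; [exact E|]; split; [exact SY|]; split.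
    + apply NNPP; intro N; apply NY.
      split; [split; [apply subset_refl|exact SY]|exact N].
    + intros Z PZ; apply (HZ Z); [intros a h; destruct (E a h)|exact PZ].
  - intros [E [SY [M N]]].
    split; [split; [intros a h; destruct (E a h)|exact SY]|].
    split; [exact E|]; split.
    + intros [_ NM]; exact (NM M).
    + intros Z _ PZ; split; [split; [exact (proj1 PZ)|exact SY]|exact (N Z PZ)].
Qed.

Lemma Eset_Ka L G X Y : Eset Ka L G X Y <-> same X Y /\ answer_set L G Y.
Proof.
  simpl; unfold total_closed, Es_set, interp_over, answer_set, total; split.
  - intros [[_ SY] [E HC]]; split; [exact E|]; split; [exact SY|]; split.
    + destruct (HC Y (subset_refl Y)) as [_ [[_ M]|[C _]]];
        [exact M|apply htmodel_total, C].
    + intros Z PZ M; destruct (HC Z (proj1 PZ)) as [_ [[EZ _]|[_ N]]];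
        [exact (psubset_not_same PZ EZ)|exact (N M)].
  - intros [E [SY [M N]]].
    split; [split; [intros a h; apply E, h|exact SY]|]; split; [exact E|].
    intros Z SZ; split; [split; [exact SZ|exact SY]|].
    destruct (classic (same Z Y)) as [EZ|EZ].
    + left; split; [exact EZ|apply htmodel_same_total, htmodel_total; auto].
    + right; split; [apply htmodel_total, M|].
      apply N, psubset_of_not_same; auto.
Qed.

Lemma equiv_a_iff_Cset L G1 G2 :
  equiv_a L G1 G2 <-> same_htset (Cset Ka L G1) (Cset Ka L G2).
Proof.
  unfold equiv_a, same_answer_sets, same_htset; split.
  - intros H X Y; rewrite !Cset_Ka, H; tauto.
  - intros H Y; specialize (H (fun _ => False) Y); rewrite !Cset_Ka in H.
    assert (forall a : A, ~ False) by auto; tauto.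
Qed.

Lemma equiv_a_iff_Eset L G1 G2 :
  equiv_a L G1 G2 <-> same_htset (Eset Ka L G1) (Eset Ka L G2).
Proof.
  unfold equiv_a, same_answer_sets, same_htset; split.
  - intros H X Y; rewrite !Eset_Ka, H; tauto.
  - intros H Y; specialize (H Y Y); rewrite !Eset_Ka in H.
    pose proof (same_refl Y); tauto.
Qed.

End AnswerSets.

Section Strong.
Context {A : Type}.
Implicit Types (X Y Z L : aset A) (G : theory A).

Definition ht_equiv L G1 G2 : Prop :=
  forall X Y, interp_over L X Y -> (htmodel G1 X Y <-> htmodel G2 X Y).

Lemma interp_over_total L X Y : interp_over L X Y -> interp_over L Y Y.
Proof. intros [_ SY]; split; [apply subset_refl|exact SY]. Qed.

Lemma same_htset_Cs_set L G1 G2 :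
  same_htset (Cs_set L G1) (Cs_set L G2) <-> ht_equiv L G1 G2.
Proof.
  unfold same_htset, Cs_set, ht_equiv; split.
  - intros H X Y I; specialize (H X Y); split; intro M; apply NNPP; tauto.
  - intros H X Y; split; intros [I N]; split; auto; rewrite (H X Y I) in *; auto.
Qed.

Lemma Es_set_iff L G X Y :
  Es_set L G X Y <-> interp_over L X Y /\ cmodel G Y /\ (same X Y \/ ~ htmodel G X Y).
Proof.
  unfold Es_set, total.
  destruct (classic (same X Y)) as [E|E]; [rewrite htmodel_same_total by exact E|]; tauto.
Qed.

Lemma htmodel_iff_Es_set L G X Y : interp_over L X Y ->
  (htmodel G X Y <-> Es_set L G Y Y /\ (same X Y \/ ~ Es_set L G X Y)).
Proof.
  intro I; rewrite !Es_set_iff; pose proof (interp_over_total I).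
  pose proof (@cmodel_of_htmodel _ G _ _ (proj1 I)); pose proof (same_refl Y).
  destruct (classic (same X Y)) as [E|E]; [rewrite htmodel_same_total by exact E|]; tauto.
Qed.

Lemma same_htset_Es_set L G1 G2 :
  same_htset (Es_set L G1) (Es_set L G2) <-> ht_equiv L G1 G2.
Proof.
  split.
  - intros H X Y I; rewrite !(htmodel_iff_Es_set _ I), (H X Y), (H Y Y); tauto.
  - intros H X Y; rewrite !Es_set_iff, <- !htmodel_total.
    split; intros [I D]; pose proof (interp_over_total I);
      rewrite (H X Y I), (H Y Y) in *; auto.
Qed.

Lemma htmodel_agree_of_ht_equiv L G1 G2 X Y :
  theory_over L G1 -> theory_over L G2 -> ht_equiv L G1 G2 -> subset X Y ->
  (htmodel G1 X Y <-> htmodel G2 X Y).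
Proof.
  intros T1 T2 H S; rewrite (htmodel_restr X Y T1), (htmodel_restr X Y T2).
  apply H, interp_over_restr, S.
Qed.

Lemma equiv_s_of_ht_equiv L G1 G2 : theory_over L G1 -> theory_over L G2 ->
  ht_equiv L G1 G2 -> equiv_s L G1 G2.
Proof.
  intros T1 T2 H L' _ G _ Y; split; apply answer_set_tunion_congr; intros X S;
    [|symmetry]; exact (htmodel_agree_of_ht_equiv T1 T2 H S).
Qed.

Definition separating X Y : theory A :=
  tunion (facts X)
    (fun p => exists a b, Y a /\ ~ X a /\ Y b /\ p = Imp (Atom a) (Atom b)).

Lemma separating_over L X Y : subset X Y -> subset Y L -> theory_over L (separating X Y).
Proof.
  intros SX SY p [Hp|[a [b [ya [_ [yb ->]]]]]].
  - exact (facts_over (fun a h => SY a (SX a h)) Hp).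
  - simpl; auto.
Qed.

Lemma htmodel_separating X Y Z : subset X Y -> same Z X \/ same Z Y ->
  htmodel (separating X Y) Z Y.
Proof.
  intros SX EZ p [[a [xa ->]]|[a [b [ya [nxa [yb ->]]]]]]; simpl; firstorder.
Qed.

Lemma separating_htmodel_cases X Y Z : subset Z Y ->
  htmodel (separating X Y) Z Y -> same Z X \/ subset Y Z.
Proof.
  intros SZ M; assert (XZ : subset X Z).
  { apply (htmodel_facts X Z Y); intros p Hp; apply M; left; exact Hp. }
  destruct (classic (exists a, Y a /\ ~ X a /\ Z a)) as [[a [ya [nxa za]]]|NE].
  - right; intros b yb; destruct (classic (X b)) as [xb|nxb]; [exact (XZ b xb)|].
    apply (M (Imp (Atom a) (Atom b))); [right; exists a, b; auto|exact za].
  - left; intro a; split; [|apply XZ]; intro za.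
    apply NNPP; intro nxa; apply NE; exists a; auto.
Qed.

Lemma answer_set_separating L G X Y : subset X Y -> subset Y L -> cmodel G Y ->
  ~ htmodel G X Y -> answer_set L (tunion G (separating X Y)) Y.
Proof.
  intros SX SY C N; split; [exact SY|split].
  - apply htmodel_tunion; split; [apply htmodel_total, C|].
    apply htmodel_separating; [exact SX|right; apply same_refl].
  - intros Z [SZ NYZ] M; apply htmodel_tunion in M as [M MS].
    destruct (separating_htmodel_cases SZ MS) as [E|YZ]; [|exact (NYZ YZ)].
    apply N; rewrite <- (htmodel_same G E (same_refl Y)); exact M.
Qed.

Lemma equiv_s_sym L G1 G2 : equiv_s L G1 G2 -> equiv_s L G2 G1.
Proof. intros H L' S G T Y; specialize (H L' S G T Y); tauto. Qed.

Lemma htmodel_of_equiv_s L G1 G2 : equiv_s L G1 G2 ->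
  forall X Y, interp_over L X Y -> htmodel G1 X Y -> htmodel G2 X Y.
Proof.
  intros H X Y [SX SY] M1; apply NNPP; intro N2.
  pose proof (cmodel_of_htmodel SX M1) as C1.
  destruct (classic (cmodel G2 Y)) as [C2|C2].
  - pose proof (answer_set_separating SX SY C2 N2) as AS.
    apply (proj2 (H L (subset_refl L) _ (separating_over SX SY) Y)) in AS.
    destruct AS as [_ [_ Nm]]; apply (Nm X).
    + apply psubset_of_not_same; [exact SX|].
      intro E; apply N2, (htmodel_same_total G2 E), C2.
    + apply htmodel_tunion; split; [exact M1|].
      apply htmodel_separating; [exact SX|left; apply same_refl].
  - apply C2, (cmodel_of_answer_set (L := L) (F := facts Y)).
    apply (proj1 (H L (subset_refl L) _ (facts_over SY) Y)).
    apply answer_set_tunion_facts; [apply subset_refl|exact SY|exact C1|].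
    intros Z SZ [_ N]; contradiction.
Qed.

Lemma equiv_s_iff_ht_equiv L G1 G2 : theory_over L G1 -> theory_over L G2 ->
  equiv_s L G1 G2 <-> ht_equiv L G1 G2.
Proof.
  intros T1 T2; split; [|apply equiv_s_of_ht_equiv; auto].
  intros H X Y I; split;
    [apply (htmodel_of_equiv_s H)|apply (htmodel_of_equiv_s (equiv_s_sym H))]; exact I.
Qed.

Lemma equiv_s_iff_Cset L G1 G2 : theory_over L G1 -> theory_over L G2 ->
  equiv_s L G1 G2 <-> same_htset (Cset Ks L G1) (Cset Ks L G2).
Proof. intros T1 T2; simpl; rewrite same_htset_Cs_set; apply equiv_s_iff_ht_equiv; auto. Qed.

Lemma equiv_s_iff_Eset L G1 G2 : theory_over L G1 -> theory_over L G2 ->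
  equiv_s L G1 G2 <-> same_htset (Eset Ks L G1) (Eset Ks L G2).
Proof. intros T1 T2; simpl; rewrite same_htset_Es_set; apply equiv_s_iff_ht_equiv; auto. Qed.

End Strong.

Section Uniform.
Context {A : Type}.
Implicit Types (X Y Z L : aset A) (G : theory A).

Definition ue_model L G X Y : Prop :=
  interp_over L X Y /\ cmodel G Y /\
  (forall Z, subset X Z -> psubset Z Y -> ~ htmodel G Z Y).

Lemma Cset_Ku L G X Y : Cset Ku L G X Y <-> ue_model L G X Y.
Proof.
  simpl; unfold ue_model, there_closed, Cs_set; split.
  - intros [I [NY HZ]]; split; [exact I|split].
    + apply htmodel_total, NNPP; intro N; apply NY; split; [|exact N].
      exact (interp_over_total I).
    + intros Z XZ PZ; apply HZ; auto.
  - intros [[SX SY] [C HZ]]; split; [split; auto|split].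
    + intros [_ N]; apply N, htmodel_total, C.
    + intros Z XZ PZ; split; [split; [exact (proj1 PZ)|exact SY]|apply HZ; auto].
Qed.

Lemma Eset_Ku L G X Y : Eset Ku L G X Y <-> ue_model L G X Y.
Proof.
  simpl; unfold ue_model, closed_in; split.
  - intros [[SX SY] HC]; split; [split; auto|split].
    + destruct (proj1 (Es_set_iff L G Y Y) (HC Y SX (subset_refl Y))) as [_ [C _]].
      exact C.
    + intros Z XZ PZ.
      destruct (proj1 (Es_set_iff L G Z Y) (HC Z XZ (proj1 PZ))) as [_ [_ [E|N]]];
        [contradiction (psubset_not_same PZ E)|exact N].
  - intros [[SX SY] [C HZ]]; split; [split; auto|]; intros Z XZ ZY.
    apply Es_set_iff; split; [split; auto|split; [exact C|]].
    destruct (classic (same Z Y)) as [E|E]; [left; exact E|right].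
    apply HZ, psubset_of_not_same; auto.
Qed.

Lemma ue_model_of_equiv_u L G1 G2 : equiv_u L G1 G2 ->
  forall X Y, ue_model L G1 X Y -> ue_model L G2 X Y.
Proof.
  intros H X Y [[SX SY] [C HZ]].
  assert (AS : forall W, subset X W -> subset W Y ->
                 answer_set L (tunion G2 (facts W)) Y).
  { intros W XW WY.
    apply (H L (subset_refl L) _ (facts_over (fun a h => SY a (WY a h))) (facts_factual (X := W))).
    apply answer_set_tunion_facts; auto.
    intros Z WZ; apply HZ; intros a h; apply WZ, XW, h. }
  split; [split; auto|split].
  - exact (cmodel_of_answer_set (AS Y SX (subset_refl Y))).
  - intros Z XZ PZ; exact (answer_set_tunion_facts_min (AS Z XZ (proj1 PZ)) PZ).
Qed.

Lemma equiv_u_sym L G1 G2 : equiv_u L G1 G2 -> equiv_u L G2 G1.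
Proof. intros H L' S G T F Y; specialize (H L' S G T F Y); tauto. Qed.

Section UEModelInclusion.
Variables (L : aset A) (G1 G2 : theory A).
Hypotheses (T1 : theory_over L G1) (T2 : theory_over L G2)
  (ue12 : forall X Y, ue_model L G1 X Y -> ue_model L G2 X Y).

Lemma cmodel_of_ue_model_inclusion Y : cmodel G1 Y -> cmodel G2 Y.
Proof.
  intro C1; apply (cmodel_restr Y T2).
  assert (U : ue_model L G1 (restr L Y) (restr L Y)).
  { split; [apply interp_over_restr, subset_refl|split].
    - apply (cmodel_restr Y T1), C1.
    - intros Z YZ [_ N]; contradiction (N YZ). }
  apply (ue12 U).
Qed.

Lemma htmodel_lift X Y : subset X Y -> ~ subset Y X -> cmodel G1 Y ->
  htmodel G2 X Y -> exists X', subset X X' /\ psubset X' Y /\ htmodel G1 X' Y.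
Proof.
  intros SX NYX C1 M2.
  rewrite (htmodel_restr X Y T2) in M2; rewrite (cmodel_restr Y T1) in C1.
  destruct (classic (subset (restr L Y) (restr L X))) as [YX|YX].
  - exists X; split; [apply subset_refl|split; [split; auto|]].
    apply (htmodel_restr X Y T1), (htmodel_same_total G1); [|exact C1].
    intro a; split; [intros [h l]; split; auto|apply YX].
  - assert (NU : ~ ue_model L G2 (restr L X) (restr L Y)).
    { intros [_ [_ HZ]]; apply (HZ (restr L X)); [apply subset_refl| |exact M2].
      split; [apply interp_over_restr, SX|exact YX]. }
    assert (EZ : exists Z, subset (restr L X) Z /\ psubset Z (restr L Y) /\
                           htmodel G1 Z (restr L Y)).
    { apply NNPP; intro NE; apply NU, ue12.
      split; [apply interp_over_restr, SX|split; [exact C1|]].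
      intros Z XZ PZ MZ; apply NE; exists Z; auto. }
    destruct EZ as [Z [XZ [[ZY NYZ] MZ]]].
    assert (E : same (restr L (fun a => X a \/ Z a)) Z).
    { intro a; split; [intros [[xa|za] la]; [apply XZ; split|]; auto|].
      intro za; split; [right; exact za|exact (proj2 (ZY a za))]. }
    exists (fun a => X a \/ Z a); split; [intros a h; left; exact h|split; [split|]].
    + intros a [xa|za]; [exact (SX a xa)|exact (proj1 (ZY a za))].
    + intro YX'; apply NYZ; intros a [ya la].
      destruct (YX' a ya) as [xa|za]; [apply XZ; split; auto|exact za].
    + apply (htmodel_restr _ Y T1); rewrite (htmodel_same G1 E (same_refl _)); exact MZ.
Qed.

Lemma answer_set_of_ue_model_inclusion L' G Y : factual_theory G ->
  answer_set L' (tunion G1 G) Y -> answer_set L' (tunion G2 G) Y.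
Proof.
  intros FG [SY [M N]]; apply htmodel_tunion in M as [M1 MG].
  pose proof (proj1 (htmodel_total G1 Y) M1) as C1.
  split; [exact SY|split].
  - apply htmodel_tunion; split; [apply htmodel_total, cmodel_of_ue_model_inclusion, C1|exact MG].
  - intros X [SX NYX] M; apply htmodel_tunion in M as [M2 MGX].
    destruct (htmodel_lift SX NYX C1 M2) as [X' [XX' [PX' M1']]].
    apply (N X' PX'), htmodel_tunion; split; [exact M1'|].
    intros p Hp; exact (factual_htsat_mono (FG p Hp) XX' (proj1 PX') (MGX p Hp)).
Qed.

End UEModelInclusion.

Lemma equiv_u_iff_same_ue_models L G1 G2 : theory_over L G1 -> theory_over L G2 ->
  equiv_u L G1 G2 <-> (forall X Y, ue_model L G1 X Y <-> ue_model L G2 X Y).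
Proof.
  intros T1 T2; split.
  - intros H X Y; split; [apply (ue_model_of_equiv_u H)|].
    apply (ue_model_of_equiv_u (equiv_u_sym H)).
  - intros H L' _ G _ F Y; split;
      [apply (answer_set_of_ue_model_inclusion T1 T2)|
       apply (answer_set_of_ue_model_inclusion T2 T1)]; auto; intros X Z; apply H.
Qed.

Lemma equiv_u_iff_Cset L G1 G2 : theory_over L G1 -> theory_over L G2 ->
  equiv_u L G1 G2 <-> same_htset (Cset Ku L G1) (Cset Ku L G2).
Proof.
  intros T1 T2; rewrite equiv_u_iff_same_ue_models by auto; unfold same_htset.
  setoid_rewrite Cset_Ku; reflexivity.
Qed.

Lemma equiv_u_iff_Eset L G1 G2 : theory_over L G1 -> theory_over L G2 ->
  equiv_u L G1 G2 <-> same_htset (Eset Ku L G1) (Eset Ku L G2).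
Proof.
  intros T1 T2; rewrite equiv_u_iff_same_ue_models by auto; unfold same_htset.
  setoid_rewrite Eset_Ku; reflexivity.
Qed.

End Uniform.

Unset Implicit Arguments.

Theorem mainTheorem4 (A : Type) (L : aset A) (G1 G2 : theory A)
  (H1 : theory_over L G1) (H2 : theory_over L G2) (e : ekind) :
  (equiv e L G1 G2 <-> same_htset (Cset e L G1) (Cset e L G2)) /\
  (equiv e L G1 G2 <-> same_htset (Eset e L G1) (Eset e L G2)).
Proof.
  destruct e; split.
  - apply equiv_c_iff_Cset.
  - apply equiv_c_iff_Eset.
  - apply equiv_a_iff_Cset.
  - apply equiv_a_iff_Eset.
  - apply equiv_s_iff_Cset; assumption.
  - apply equiv_s_iff_Eset; assumption.
  - apply equiv_u_iff_Cset; assumption.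
  - apply equiv_u_iff_Eset; assumption.
Qed.
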